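(* Let $p$ be a prime with $p\equiv\pm3\pmod 8$, $q=p^s$, let $m$ be an integer with $2^m\mid(q-1)$ and $m\ge 3$ if $p\equiv 3\pmod 8$, $m\ge 2$ if $p\equiv -3\pmod 8$, let $\lambda$ be a multiplicative character of order $2^m$ on $\mathbb F_q$, and let $n\ge1$. For $1\le r\le m$, $0\le t\le m$ and odd $c_0$ put $$W_{r,t}(c_0)=\sum_{\substack{j_0=1\\ 2\nmid j_0}}^{2^r-1}G(\lambda^{2^{m-r}j_0})\,\zeta_{2^{m-t}}^{2^{m-r}c_0j_0},\qquad S_t=\sum_{\substack{c_0=1\\2\nmid c_0}}^{2^{m-t}}\Bigl(\sum_{j=1}^{2^m-1} G(\lambda^j)\zeta_{2^{m-t}}^{c_0j}\Bigr)^n.$$ Then $$S_{m-1}+S_m=\Bigl(\sum_{r=1}^{m-1} W_{r,m}(1)+W_{m,m}(1)\Bigr)^n+\Bigl(\sum_{r=1}^{m-1} W_{r,m}(1)-W_{m,m}(1)\Bigr)^n.$$ If $p\equiv 3\pmod{8}$, then $S_{m-2}=2\cdot\bigl(\sum_{r=1}^{m-1} W_{r,m-2}(1)\bigr)^n$, and for $0\le t\le m-3$, $$S_t=2^{m-t-2}\Bigl[\Bigl(\sum_{r=1}^{t+1} W_{r,t}(1)+W_{t+3,t}(1)\Bigr)^n+\Bigl(\sum_{r=1}^{t+1} W_{r,t}(1)-W_{t+3,t}(1)\Bigr)^n\Bigr].$$ If $p\equiv -3\pmod{8}$ and $0\le t\le m-2$, then $$S_t=2^{m-t-2}\Bigl[\Bigl(\sum_{r=1}^{t+1}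 W_{r,t}(1)+W_{t+2,t}(1)\Bigr)^n+\Bigl(\sum_{r=1}^{t+1} W_{r,t}(1)-W_{t+2,t}(1)\Bigr)^n\Bigr].$$
   Context: Multiplicative characters are extended by $\psi(0)=0$; $\zeta_k=e^{2\pi i/k}$. The Gauss sum of a nontrivial character $\psi$ on $\mathbb F_q$ is $G(\psi)=\sum_{x\in\mathbb F_q}\psi(x)\zeta_p^{\mathrm{Tr}(x)}$, with $\mathrm{Tr}$ the trace from $\mathbb F_q$ to $\mathbb F_p$. *)

From HB Require Import structures.
From mathcomp Require Import all_boot all_order all_algebra all_field.
Set Implicit Arguments. Unset Strict Implicit. Unset Printing Implicit Defensive.
Import Order.TTheory GRing.Theory Num.Theory.
Local Open Scope ring_scope.

(* zeta k = e^{2 pi i / k}: k.-root (-1) is e^{i pi / k} (minimal nonnegative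
   argument among the k-th roots of -1), so its square is e^{2 pi i/k}. *)
Definition zeta (k : nat) : algC := (k.-root (-1)) ^+ 2.

Definition mulchar (F : finFieldType) (psi : F -> algC) : Prop :=
  [/\ psi 0 = 0, psi 1 = 1 & forall x y : F, psi (x * y) = psi x * psi y].

Definition chpow (F : finFieldType) (psi : F -> algC) (j : nat) : F -> algC :=
  fun x => if x == 0 then 0 else psi x ^+ j.

Definition char_trivial (F : finFieldType) (psi : F -> algC) : Prop :=
  forall x : F, x != 0 -> psi x = 1.

Definition char_order (F : finFieldType) (psi : F -> algC) (d : nat) : Prop :=
  [/\ (0 < d)%N, char_trivial (chpow psi d)
    & forall e, (0 < e < d)%N -> ~ char_trivial (chpow psi e)].

Definition trace (F : finFieldType) (p s : nat) (x : F) : F :=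
  \sum_(i < s) x ^+ (p ^ i).

Definition trace_nat (F : finFieldType) (p s : nat) (x : F) : nat :=
  if [pick k : 'I_p | trace p s x == (k : nat)%:R] is Some k then (k : nat) else 0%N.

Definition gauss (F : finFieldType) (p s : nat) (psi : F -> algC) : algC :=
  \sum_(x : F) psi x * zeta p ^+ trace_nat p s x.

Definition Wsum (F : finFieldType) (p s m : nat) (lam : F -> algC)
    (r t c0 : nat) : algC :=
  \sum_(1 <= j0 < 2 ^ r | odd j0)
     gauss p s (chpow lam (2 ^ (m - r) * j0)) *
     zeta (2 ^ (m - t)) ^+ (2 ^ (m - r) * c0 * j0).

Definition Ssum (F : finFieldType) (p s m : nat) (lam : F -> algC)
    (n t : nat) : algC :=
  \sum_(1 <= c0 < (2 ^ (m - t)).+1 | odd c0)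
     (\sum_(1 <= j < 2 ^ m) gauss p s (chpow lam j) *
        zeta (2 ^ (m - t)) ^+ (c0 * j)) ^+ n.

From HB Require Import structures.
From mathcomp Require Import all_boot all_order all_algebra all_field.
From mathcomp Require Import zify ring.
Set Implicit Arguments. Unset Strict Implicit. Unset Printing Implicit Defensive.
Import Order.TTheory GRing.Theory Num.Theory.
Local Open Scope ring_scope.

(* Grouping the exponents j = 2^(m-r) j0 (j0 odd) by their 2-adic valuation turns the
   inner sum of S_t into sum_r W_{r,t}(c0).  For r <= t + 1 the term W_{r,t}(c0) does
   not depend on the odd c0.  For r > t + 1 it depends only on c0 mod 2^(r-t), it is
   unchanged when c0 is multiplied by p (the Frobenius gives G(psi^p) = G(psi)), and it
   changes sign when c0 is multiplied by 1 + 2^(r-t-1).  Hence it vanishes as soon as a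
   power of p is congruent to 1 + 2^(r-t-1) mod 2^(r-t), which happens for every r > t + 1
   except r = t + 3 when p = 3 mod 8 and r = t + 2 when p = 5 mod 8.  The surviving term
   takes the values W(1) and -W(1) equally often on the odd residues c0. *)

Lemma zeta_unity (k : nat) : (0 < k)%N -> zeta k ^+ k = 1.
Proof.
move=> k0; rewrite /zeta -exprM mulnC exprM rootCK //.
by rewrite expr2 mulrNN mulr1.
Qed.

Lemma zeta_expr_mod (k a : nat) : (0 < k)%N -> zeta k ^+ a = zeta k ^+ (a %% k).
Proof. by move=> k0; rewrite (expr_mod _ (zeta_unity k0)). Qed.

Lemma zeta_expr_eqmod (k a b : nat) : (0 < k)%N -> (a = b %[mod k])%N ->
  zeta k ^+ a = zeta k ^+ b.
Proof. by move=> k0 ab; rewrite zeta_expr_mod // ab -zeta_expr_mod. Qed.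

Lemma zeta_expr_dvd (k a : nat) : (0 < k)%N -> (k %| a)%N -> zeta k ^+ a = 1.
Proof. by move=> k0 /eqP ka; rewrite zeta_expr_mod // ka expr0. Qed.

Lemma zeta_pow2_half (K u : nat) : (0 < K)%N -> odd u ->
  zeta (2 ^ K) ^+ (2 ^ K.-1 * u) = -1.
Proof.
move=> K0 ou; rewrite /zeta -exprM mulnA -expnS prednK //.
by rewrite exprM rootCK ?expn_gt0 // -signr_odd ou expr1.
Qed.

Lemma mulchar_expr (F : finFieldType) (lam : F -> algC) (x : F) (k : nat) :
  mulchar lam -> lam (x ^+ k) = lam x ^+ k.
Proof.
case=> _ lam1 lamM; elim: k => [|k IHk]; first by rewrite !expr0.
by rewrite !exprS lamM IHk.
Qed.

Section Frobenius.
Variables (F : finFieldType) (p s : nat).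
Hypotheses (pchF : p \in [pchar F]) (cardF : #|F| = (p ^ s)%N).

Lemma trace_frobenius (x : F) : trace p s (x ^+ p) = trace p s x.
Proof.
rewrite /trace.
have xps : x ^+ (p ^ s) = x by rewrite -cardF expf_card.
have shift : \sum_(i < s) (x ^+ p) ^+ (p ^ i) = \sum_(i < s) x ^+ (p ^ bump 0 i).
  by apply: eq_bigr => i _; rewrite -exprM -expnS.
have recr := big_ord_recr s (fun i : 'I_s.+1 => x ^+ (p ^ i)).
have recl := big_ord_recl s (fun i : 'I_s.+1 => x ^+ (p ^ i)).
rewrite /= xps expn0 expr1 in recr recl.
by rewrite shift; apply: (addrI x); rewrite -recl recr addrC.
Qed.

Lemma gauss_chpowMp (lam : F -> algC) (e : nat) : mulchar lam ->
  gauss p s (chpow lam (p * e)) = gauss p s (chpow lam e).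
Proof.
move=> lamM; have p_gt0 : (0 < p)%N := prime_gt0 (pcharf_prime pchF).
have frob_inj : injective (fun x : F => x ^+ p).
  exact: fmorph_inj (GRing.pFrobenius_aut pchF).
rewrite /gauss [RHS](reindex_inj frob_inj) /=; apply: eq_bigr => x _.
rewrite /trace_nat trace_frobenius /chpow expf_eq0 p_gt0 /=.
by case: (x == 0) => //; rewrite mulchar_expr // -exprM.
Qed.

End Frobenius.

Section OddSums.
Variable R : zmodType.
Implicit Types (N : nat) (f : nat -> R).

Lemma big_odd_from1 N f :
  \sum_(1 <= j < N | odd j) f j = \sum_(j < N | odd j) f j.
Proof.
case: N => [|N]; first by rewrite big_geq // big_ord0.
by rewrite -big_mkord [RHS]big_mkcond [LHS]big_mkcond [RHS]big_ltn //= add0r.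
Qed.

Lemma sum_nat_double N f :
  \sum_(0 <= j < 2 * N) f j =
  \sum_(0 <= i < N) f (2 * i)%N + \sum_(0 <= i < N) f (2 * i).+1.
Proof.
elim: N => [|N IHN]; first by rewrite muln0 !big_geq // addr0.
rewrite mulnS !add2n !big_nat_recr //= -add2n IHN -!addrA; congr (_ + _).
by rewrite addrCA.
Qed.

Lemma sum_odd_double N f :
  \sum_(j < 2 * N | odd j) f j = \sum_(0 <= i < N) f (2 * i).+1.
Proof.
rewrite -big_mkord big_mkcond sum_nat_double big1 ?add0r; last first.
  by move=> i _; rewrite oddM.
by apply: eq_bigr => i _; rewrite /= oddM.
Qed.

Lemma sum_pow2_valuation0 m f :
  \sum_(0 <= j < 2 ^ m) f j =
  f 0%N + \sum_(0 <= r < m) \sum_(0 <= i < 2 ^ r) f (2 ^ (m - r.+1) * (2 * i).+1)%N.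
Proof.
elim: m f => [|m IHm] f; first by rewrite expn0 big_nat1 big_geq // addr0.
rewrite expnS sum_nat_double IHm muln0 big_nat_recr // subnn expn0 addrA.
congr (_ + _ + _); last by apply: eq_bigr => i _; rewrite mul1n.
apply: eq_big_nat => r /andP[_ rm]; apply: eq_bigr => i _.
by rewrite mulnA -expnS subSS subnSK.
Qed.

Lemma sum_pow2_valuation m f :
  \sum_(1 <= j < 2 ^ m) f j =
  \sum_(1 <= r < m.+1) \sum_(1 <= j0 < 2 ^ r | odd j0) f (2 ^ (m - r) * j0)%N.
Proof.
have := sum_pow2_valuation0 m f; rewrite big_ltn ?expn_gt0 // => /addrI ->.
rewrite big_add1 /=; apply: eq_bigr => r _.
by rewrite big_odd_from1 expnS (sum_odd_double _ (fun j => f (2 ^ (m - r.+1) * j)%N)).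
Qed.

Lemma sum_odd_periodic (d M : nat) (phi : nat -> R) : ~~ odd d ->
  \sum_(1 <= c < (d * M).+1 | odd c) phi (c %% d)%N =
  (\sum_(0 <= c < d | odd c) phi c) *+ M.
Proof.
move=> d_even; rewrite big_odd_from1 big_mkcond big_ord_recr /=.
rewrite oddM (negbTE d_even) /= addr0 -big_mkcond.
rewrite -(big_mkord (fun c => odd c) (fun c => phi (c %% d)%N)).
elim: M => [|M IHM]; first by rewrite muln0 big_geq.
rewrite mulnS addnC (big_cat_nat _ (leq_addr d _)) //= IHM mulrS addrC; congr (_ + _).
rewrite -{1}[(d * M)%N]add0n big_addn addKn big_mkcond [RHS]big_mkcond.
apply: eq_big_nat => i /andP[_ id].
by rewrite oddD oddM (negbTE d_even) addbF mulnC addnC modnMDl modn_small.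
Qed.

Lemma sum_odd_pow2_mul (r u : nat) (f : nat -> R) :
  (0 < r)%N -> odd u -> (forall j, f (j %% 2 ^ r)%N = f j) ->
  \sum_(1 <= j < 2 ^ r | odd j) f (u * j)%N = \sum_(1 <= j < 2 ^ r | odd j) f j.
Proof.
move=> r_gt0 u_odd f_per; rewrite !big_odd_from1.
have N_gt0 : (0 < 2 ^ r)%N by rewrite expn_gt0.
pose h (j : 'I_(2 ^ r)) := Ordinal (ltn_pmod (u * j) N_gt0).
have h_inj : injective h.
  suff h_le_inj (a b : 'I_(2 ^ r)) : (a <= b)%N -> h a = h b -> a = b.
    by move=> a b; case: (leqP a b) => [|/ltnW] ab hab; last apply/esym; apply: h_le_inj.
  move=> ab /(congr1 val) /= /eqP; rewrite eq_sym eqn_mod_dvd ?leq_mul2l ?ab ?orbT //.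
  rewrite -mulnBr Gauss_dvdr; last by rewrite coprimeXl // coprime2n.
  move=> dvd_ba; apply: val_inj; apply/eqP; rewrite eqn_leq ab /= -subn_eq0.
  apply/negP => /negP; rewrite -lt0n => /dvdn_leq/(_ dvd_ba).
  by have := ltn_ord b; lia.
rewrite [RHS](reindex_inj h_inj) /=; apply: eq_big => j /=.
  by rewrite odd_mod ?oddM ?u_odd // -(prednK r_gt0) expnS oddM.
by rewrite f_per.
Qed.

Lemma sum_nat_single (a b k : nat) f : (a <= k < b)%N ->
  (forall r, (a <= r < b)%N -> r != k -> f r = 0) -> \sum_(a <= r < b) f r = f k.
Proof.
move=> kab f0; rewrite (bigD1_seq k) ?mem_index_iota ?iota_uniq //= big1_seq ?addr0 //.
by move=> r /andP[rk]; rewrite mem_index_iota => /f0->.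
Qed.

Lemma sum_odd_lt4 f : \sum_(0 <= c < 4 | odd c) f c = f 1%N + f 3%N.
Proof. by rewrite big_mkcond !big_nat_recr //= big_geq // !(add0r, addr0). Qed.

Lemma sum_odd_lt8 f :
  \sum_(0 <= c < 8 | odd c) f c = f 1%N + f 3%N + f 5%N + f 7%N.
Proof. by rewrite big_mkcond !big_nat_recr //= big_geq // !(add0r, addr0). Qed.

End OddSums.

Lemma expn_1_plus_pow2 (a j u : nat) : (2 <= a)%N -> odd u ->
  exists2 v, odd v & ((1 + 2 ^ a * u) ^ (2 ^ j) = 1 + 2 ^ (a + j) * v)%N.
Proof.
move=> a_ge2 u_odd; elim: j => [|j [v v_odd vE]]; first by exists u; rewrite ?addn0.
exists (v + 2 ^ (a + j).-1 * v ^ 2)%N.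
  by rewrite oddD v_odd oddM oddX (_ : (a + j).-1 == 0%N = false) //; apply/eqP; lia.
have X2 : (2 ^ (a + j) = 2 * 2 ^ (a + j).-1)%N by rewrite -expnS prednK //; lia.
rewrite expnSr expnM vE addnS expnS; set X := (2 ^ (a + j).-1)%N.
by rewrite !expnS expn0 !muln1 X2 -/X; ring.
Qed.

Lemma pow2_odd_mod (b v : nat) : odd v -> (2 ^ b * v = 2 ^ b %[mod 2 ^ b.+1])%N.
Proof.
move=> v_odd; rewrite -(odd_double_half v) v_odd -addnn.
have -> : (2 ^ b * (true + (v./2 + v./2)) = v./2 * 2 ^ b.+1 + 2 ^ b)%N.
  by rewrite expnS /=; lia.
by rewrite modnMDl.
Qed.

(* [1 + 2^(k-1)] is the residue mod [2^k] whose multiplication negates [Wsum]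
   ([Wsum_flip]). *)
Definition orbit_has_flip (p k : nat) : Prop :=
  exists E, (p ^ E = 1 + 2 ^ k.-1 %[mod 2 ^ k])%N.

Lemma orbit_has_flip_1_plus_pow2 (a k u : nat) : (2 <= a < k)%N -> odd u ->
  orbit_has_flip (1 + 2 ^ a * u) k.
Proof.
move=> /andP[a_ge2 ak] u_odd; have [v v_odd vE] := expn_1_plus_pow2 (k.-1 - a) a_ge2 u_odd.
exists (2 ^ (k.-1 - a))%N; rewrite vE subnKC; last by lia.
by rewrite -modnDmr -(prednK (ltn_trans _ ak) : k.-1.+1 = k) ?pow2_odd_mod ?modnDmr //; lia.
Qed.

Lemma orbit_has_flip_3mod8 (p k : nat) : (p %% 8 = 3)%N -> (2 <= k)%N -> k != 3%N ->
  orbit_has_flip p k.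
Proof.
move=> p3 k_ge2 k_neq3; have [k2 | k_ge4] : k = 2%N \/ (4 <= k)%N by lia.
  by exists 1%N; rewrite k2 expn1 -(modn_dvdm _ (isT : (2 ^ 2 %| 8)%N)) p3.
have p2E : (p ^ 2 = 1 + 2 ^ 3 * (2 * (4 * (p %/ 8) ^ 2 + 3 * (p %/ 8))).+1)%N.
  by rewrite {1}(divn_eq p 8) p3; set q := (p %/ 8)%N; ring.
have [E hE] : orbit_has_flip (p ^ 2) k.
  by rewrite p2E; apply: orbit_has_flip_1_plus_pow2; rewrite /= ?oddM //; lia.
by exists (2 * E)%N; rewrite expnM.
Qed.

Lemma orbit_has_flip_5mod8 (p k : nat) : (p %% 8 = 5)%N -> (3 <= k)%N ->
  orbit_has_flip p k.
Proof.
move=> p5 k_ge3; have -> : p = (1 + 2 ^ 2 * (2 * (p %/ 8)).+1)%N.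
  by rewrite {1}(divn_eq p 8) p5; set q := (p %/ 8)%N; ring.
by apply: orbit_has_flip_1_plus_pow2; rewrite /= ?oddM //; lia.
Qed.

Section Wsum.
Variables (F : finFieldType) (p s m : nat) (lam : F -> algC).
Hypotheses (pchF : p \in [pchar F]) (cardF : #|F| = (p ^ s)%N) (p_odd : odd p).
Hypotheses (lamM : mulchar lam) (lam_unity : forall x, x != 0 -> lam x ^+ (2 ^ m) = 1).

Local Notation W := (Wsum p s m lam).

Definition Gsum (r : nat) : algC :=
  \sum_(1 <= j0 < 2 ^ r | odd j0) gauss p s (chpow lam (2 ^ (m - r) * j0)).

Lemma gauss_chpow_mod (a : nat) :
  gauss p s (chpow lam (a %% 2 ^ m)) = gauss p s (chpow lam a).
Proof.
apply: eq_bigr => x _; rewrite /chpow.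
by case: eqP => // /eqP x_neq0; rewrite (expr_mod _ (lam_unity x_neq0)).
Qed.

Lemma Wsum_le (r t c : nat) : (r <= t)%N -> W r t c = Gsum r.
Proof.
move=> rt; apply: eq_bigr => j0 _; rewrite zeta_expr_dvd ?mulr1 ?expn_gt0 //.
by rewrite -mulnA dvdn_mulr // dvdn_exp2l //; lia.
Qed.

Lemma Wsum_succ (t c : nat) : (t < m)%N -> odd c -> W t.+1 t c = - Gsum t.+1.
Proof.
move=> tm c_odd; rewrite /Wsum /Gsum -sumrN; apply: eq_bigr => j0 j0_odd.
by rewrite -mulnA subnS zeta_pow2_half ?mulrN1 ?subn_gt0 ?oddM ?c_odd.
Qed.

Lemma Wsum_low (r t c : nat) : (r <= t.+1)%N -> (t < m)%N -> odd c ->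
  W r t c = W r t 1.
Proof.
rewrite leq_eqVlt ltnS => /predU1P[-> | rt] tm c_odd.
  by rewrite !Wsum_succ.
by rewrite !Wsum_le.
Qed.

Lemma Wsum_modn (r t c c' : nat) : (t <= r <= m)%N ->
  (c = c' %[mod 2 ^ (r - t)])%N -> W r t c = W r t c'.
Proof.
move=> /andP[tr rm] cc'; apply: eq_bigr => j0 _; congr (_ * _).
apply: zeta_expr_eqmod; first by rewrite expn_gt0.
have -> : (m - t = (m - r) + (r - t))%N by lia.
rewrite expnD -!mulnA -!muln_modr; congr (_ * _)%N.
by rewrite -modnMml cc' modnMml.
Qed.

Lemma Wsum_flip (r t c : nat) : (t < r <= m)%N -> odd c ->
  W r t (c * (1 + 2 ^ (r - t).-1)) = - W r t c.
Proof.
move=> /andP[tr rm] c_odd; rewrite /Wsum -sumrN; apply: eq_big => // j0 j0_odd.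
rewrite -mulrN; congr (_ * _).
have half : (2 ^ (m - t).-1 = 2 ^ (m - r) * 2 ^ (r - t).-1)%N.
  by rewrite -expnD; congr (_ ^ _)%N; lia.
have -> : (2 ^ (m - r) * (c * (1 + 2 ^ (r - t).-1)) * j0 =
           2 ^ (m - r) * c * j0 + 2 ^ (m - t).-1 * (c * j0))%N.
  by rewrite half; ring.
by rewrite exprD zeta_pow2_half ?mulrN1 ?oddM ?c_odd //; lia.
Qed.

Lemma Wsum_mulp (r t c : nat) : (0 < r <= m)%N -> W r t (c * p) = W r t c.
Proof.
move=> /andP[r_gt0 rm].
pose g j := gauss p s (chpow lam (2 ^ (m - r) * j)) *
            zeta (2 ^ (m - t)) ^+ (2 ^ (m - r) * c * j).
have -> : W r t (c * p) = \sum_(1 <= j0 < 2 ^ r | odd j0) g (p * j0)%N.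
  apply: eq_bigr => j0 _; rewrite /g [in RHS]mulnCA gauss_chpowMp //.
  by congr (_ * _ ^+ _); ring.
rewrite sum_odd_pow2_mul // => j.
have jmod : (2 ^ (m - r) * (j %% 2 ^ r) = (2 ^ (m - r) * j) %% 2 ^ m)%N.
  by rewrite muln_modr -expnD subnK.
rewrite /g !(mulnAC _ c) jmod gauss_chpow_mod; congr (_ * _).
apply: zeta_expr_eqmod; first by rewrite expn_gt0.
have dvd_m : (2 ^ (m - t) %| 2 ^ m)%N by rewrite dvdn_exp2l ?leq_subr.
by rewrite -[LHS](modn_dvdm _ dvd_m) modnMml modn_dvdm.
Qed.

Lemma Wsum_mulpX (r t c E : nat) : (0 < r <= m)%N -> W r t (c * p ^ E) = W r t c.
Proof.
move=> rm; elim: E => [|E IHE]; first by rewrite muln1.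
by rewrite expnSr mulnA Wsum_mulp.
Qed.

Lemma Wsum_eq0 (r t c : nat) : (t < r <= m)%N -> odd c -> orbit_has_flip p (r - t) ->
  W r t c = 0.
Proof.
move=> /andP[tr rm] c_odd [E pE].
have W_opp : W r t c = - W r t c.
  have r_gt0 : (0 < r <= m)%N by rewrite rm (leq_ltn_trans _ tr).
  have tr_le : (t <= r <= m)%N by rewrite rm ltnW.
  rewrite -Wsum_flip ?tr ?rm // -(@Wsum_mulpX r t c E) //.
  by apply: Wsum_modn => //; rewrite -modnMmr pE modnMmr.
by apply/eqP; rewrite -[_ == _](mulrn_eq0 _ 2) mulr2n {2}W_opp subrr.
Qed.

Lemma Ssum_Wsum (n t : nat) : Ssum p s m lam n t =
  \sum_(1 <= c < (2 ^ (m - t)).+1 | odd c) (\sum_(1 <= r < m.+1) W r t c) ^+ n.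
Proof.
apply: eq_bigr => c _; rewrite sum_pow2_valuation; congr (_ ^+ _).
by apply: eq_bigr => r _; apply: eq_bigr => j0 _; rewrite mulnCA mulnA.
Qed.

Lemma Wsum_sum_split (t c : nat) : (t < m)%N -> odd c ->
  \sum_(1 <= r < m.+1) W r t c =
  \sum_(1 <= r < t.+2) W r t 1 + \sum_(t.+2 <= r < m.+1) W r t c.
Proof.
move=> tm c_odd; rewrite (@big_cat_nat _ _ _ t.+2) //=.
by congr (_ + _); apply: eq_big_nat => r /andP[_ rt]; apply: Wsum_low.
Qed.

Lemma Ssum_periodic (n t d : nat) (phi : nat -> algC) :
  ~~ odd d -> (d %| 2 ^ (m - t))%N ->
  (forall c, odd c -> \sum_(1 <= r < m.+1) W r t c = phi (c %% d)%N) ->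
  Ssum p s m lam n t = (\sum_(0 <= c < d | odd c) phi c ^+ n) *+ (2 ^ (m - t) %/ d).
Proof.
move=> d_even d_dvd W_per; rewrite Ssum_Wsum.
rewrite (eq_bigr (fun c => phi (c %% d)%N ^+ n)); last by move=> c /W_per->.
by rewrite -{1}(divnK d_dvd) mulnC (@sum_odd_periodic _ d _ (fun c => phi c ^+ n)).
Qed.

Lemma Ssum_last_two (n : nat) : (0 < m)%N ->
  Ssum p s m lam n (m - 1) + Ssum p s m lam n m =
    (\sum_(1 <= r < m) W r m 1 + W m m 1) ^+ n
  + (\sum_(1 <= r < m) W r m 1 - W m m 1) ^+ n.
Proof.
move=> m_gt0.
have Ssum1 t : (m - 1 <= t)%N ->
    Ssum p s m lam n t = (\sum_(1 <= r < m.+1) W r t 1) ^+ n.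
  rewrite Ssum_Wsum => tm; have [-> | ->] : (m - t = 0 \/ m - t = 1)%N by lia.
    by rewrite big_mkcond big_nat1.
  by rewrite big_mkcond big_nat_recr // big_nat1 /= addr0.
have sumG t : (m - 1 <= t)%N -> \sum_(1 <= r < m) W r t 1 = \sum_(1 <= r < m) Gsum r.
  by move=> tm; apply: eq_big_nat => r /andP[_ rm]; apply: Wsum_le; lia.
have Wm : W m (m - 1) 1 = - Gsum m.
  have m1E : (m - 1).+1 = m by lia.
  by have := @Wsum_succ (m - 1) 1; rewrite m1E; apply; lia.
rewrite !Ssum1 ?leqnn ?leq_subr // !big_nat_recr //= !sumG ?leqnn ?leq_subr //.
by rewrite Wm Wsum_le // [LHS]addrC.
Qed.

Lemma Ssum_3mod8_subn2 (n : nat) : (p %% 8 = 3)%N -> (2 <= m)%N ->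
  Ssum p s m lam n (m - 2) = 2 * (\sum_(1 <= r < m) W r (m - 2) 1) ^+ n.
Proof.
move=> p3 m_ge2; have mt : (m - (m - 2) = 2)%N by lia.
rewrite (@Ssum_periodic n (m - 2) 4 (fun=> \sum_(1 <= r < m) W r (m - 2) 1)) ?mt //.
  by rewrite sum_odd_lt4 divnn /= mulr1n; ring.
move=> c c_odd; rewrite Wsum_sum_split //; last by lia.
rewrite (_ : (m - 2).+2 = m); last by lia.
rewrite big_nat1 Wsum_eq0 ?addr0 //; first by rewrite leqnn; lia.
by rewrite mt; apply: orbit_has_flip_3mod8.
Qed.

Lemma Ssum_3mod8 (n t : nat) : (p %% 8 = 3)%N -> (t + 3 <= m)%N ->
  Ssum p s m lam n t = (2 ^ (m - t - 2))%:R *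
    ((\sum_(1 <= r < t.+2) W r t 1 + W (t + 3) t 1) ^+ n
   + (\sum_(1 <= r < t.+2) W r t 1 - W (t + 3) t 1) ^+ n).
Proof.
move=> p3 tm; set A := \sum_(1 <= r < t.+2) W r t 1; set B := W (t + 3) t.
have tm' : (t < t + 3 <= m)%N by lia.
have B_mod c c' : (c = c' %[mod 8])%N -> B c = B c'.
  by move=> cc'; apply: Wsum_modn; [lia | rewrite addKn].
have B_mulp c : B (c * p)%N = B c by apply: Wsum_mulp; lia.
have B3 : B 3%N = B 1%N by rewrite -(B_mulp 1%N); apply: B_mod; rewrite mul1n p3.
have B5 : B 5%N = - B 1%N by rewrite -Wsum_flip // addKn.
have B7 : B 7%N = B 5%N by rewrite -(B_mulp 5%N); apply: B_mod; rewrite -modnMmr p3.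
rewrite (@Ssum_periodic n t 8 (fun d => A + B d)) //.
- rewrite sum_odd_lt8 B3 B7 B5 -mulr_natr.
  have -> : (2 ^ (m - t) %/ 8 = 2 ^ (m - t - 3))%N.
    by rewrite -{1}(subnK (_ : 3 <= m - t)%N) ?expnD ?mulnK //; lia.
  have -> : (2 ^ (m - t - 2) = 2 * 2 ^ (m - t - 3))%N.
    by rewrite -expnS; congr (_ ^ _)%N; lia.
  by rewrite natrM; ring.
- by rewrite (_ : 8 = 2 ^ 3)%N // dvdn_exp2l //; lia.
move=> c c_odd; rewrite Wsum_sum_split //; last by lia.
rewrite (@sum_nat_single _ t.+2 m.+1 (t + 3)); last 2 first.
- by lia.
- move=> r /andP[r_ge rm] r_neq; apply: Wsum_eq0 => //; first by lia.
  by apply: orbit_has_flip_3mod8 => //; lia.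
by rewrite /B; congr (_ + _); apply: Wsum_modn; rewrite ?addKn ?modn_mod //; lia.
Qed.

Lemma Ssum_5mod8 (n t : nat) : (p %% 8 = 5)%N -> (t + 2 <= m)%N ->
  Ssum p s m lam n t = (2 ^ (m - t - 2))%:R *
    ((\sum_(1 <= r < t.+2) W r t 1 + W (t + 2) t 1) ^+ n
   + (\sum_(1 <= r < t.+2) W r t 1 - W (t + 2) t 1) ^+ n).
Proof.
move=> p5 tm; set A := \sum_(1 <= r < t.+2) W r t 1; set B := W (t + 2) t.
have B3 : B 3%N = - B 1%N by rewrite -Wsum_flip ?addKn //; lia.
rewrite (@Ssum_periodic n t 4 (fun d => A + B d)) //.
- rewrite sum_odd_lt4 B3 -mulr_natr.
  have -> : (2 ^ (m - t) %/ 4 = 2 ^ (m - t - 2))%N.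
    by rewrite -{1}(subnK (_ : 2 <= m - t)%N) ?expnD ?mulnK //; lia.
  by ring.
- by rewrite (_ : 4 = 2 ^ 2)%N // dvdn_exp2l //; lia.
move=> c c_odd; rewrite Wsum_sum_split //; last by lia.
rewrite (@sum_nat_single _ t.+2 m.+1 (t + 2)); last 2 first.
- by lia.
- move=> r /andP[r_ge rm] r_neq; apply: Wsum_eq0 => //; first by lia.
  by apply: orbit_has_flip_5mod8 => //; lia.
by rewrite /B; congr (_ + _); apply: Wsum_modn; rewrite ?addKn ?modn_mod //; lia.
Qed.

End Wsum.

Theorem corollary1 (p s : nat) (F : finFieldType) (m : nat) (lam : F -> algC) (n : nat) :
  prime p -> (p %% 8 = 3 \/ p %% 8 = 5)%N ->
  p \in [pchar F] -> #|F| = (p ^ s)%N ->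
  (2 ^ m %| #|F| - 1)%N ->
  (p %% 8 = 3 -> 3 <= m)%N -> (p %% 8 = 5 -> 2 <= m)%N ->
  mulchar lam -> char_order lam (2 ^ m) ->
  (1 <= n)%N ->
  let W := Wsum p s m lam in
  let S := Ssum p s m lam n in
  [/\ S (m - 1)%N + S m =
        (\sum_(1 <= r < m) W r m 1%N + W m m 1%N) ^+ n
      + (\sum_(1 <= r < m) W r m 1%N - W m m 1%N) ^+ n,
      (p %% 8 = 3)%N ->
        S (m - 2)%N = 2 * (\sum_(1 <= r < m) W r (m - 2)%N 1%N) ^+ n
        /\ forall t : nat, (t <= m - 3)%N ->
             S t = (2 ^ (m - t - 2))%:R *
               ((\sum_(1 <= r < t.+2) W r t 1%N + W (t + 3)%N t 1%N) ^+ n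
              + (\sum_(1 <= r < t.+2) W r t 1%N - W (t + 3)%N t 1%N) ^+ n)
    & (p %% 8 = 5)%N ->
        forall t : nat, (t <= m - 2)%N ->
             S t = (2 ^ (m - t - 2))%:R *
               ((\sum_(1 <= r < t.+2) W r t 1%N + W (t + 2)%N t 1%N) ^+ n
              + (\sum_(1 <= r < t.+2) W r t 1%N - W (t + 2)%N t 1%N) ^+ n)].
Proof.
move=> _ p35 pchF cardF _ m_3mod8 m_5mod8 lamM [_ lam_triv _] _ W S.
have p_odd : odd p by rewrite -(@odd_mod p 8) //; case: p35 => ->.
have m_ge2 : (2 <= m)%N by case: p35 => [/m_3mod8 | /m_5mod8]; lia.
have lam_unity x : x != 0 -> lam x ^+ (2 ^ m) = 1.
  by move=> x_neq0; have := lam_triv x x_neq0; rewrite /chpow (negbTE x_neq0).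
split.
- by apply: Ssum_last_two => //; lia.
- move=> p3; split; first by apply: Ssum_3mod8_subn2.
  by move=> t tm; apply: Ssum_3mod8 => //; have := m_3mod8 p3; lia.
- by move=> p5 t tm; apply: Ssum_5mod8 => //; lia.
Qed.
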